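(* Let $\gamma:I\to\mathbb{R}^2$ be a $C^\infty$ curve with $0\in I$, $\gamma'(0)=\gamma''(0)=\gamma'''(0)=\mathbf{0}$ and $\gamma^{(4)}(0)\neq\mathbf{0}$. Then for every $C^\infty$ diffeomorphism germ $\psi$ of $(\mathbb{R},0)$ onto $(\mathbb{R},0)$ and every congruence $\Phi(x)=Rx+b$ of $\mathbb{R}^2$ ($R\in O(2)$, $b\in\mathbb{R}^2$), the curves $\gamma\circ\psi$ and $\Phi\circ\gamma$ have the same $(4,5;\pm7)$-cuspidal curvature $\kappa_q$ as $\gamma$.
   Context: For a curve $c$ with $c'(0)=c''(0)=c'''(0)=\mathbf{0}$ and $c^{(4)}(0)\neq\mathbf{0}$, set $A=\det(c^{(5)}(0),c^{(4)}(0))$, $B=\det(c^{(6)}(0),c^{(4)}(0))$, $C=\det(c^{(7)}(0),c^{(4)}(0))$, $D=\det(c^{(6)}(0),c^{(5)}(0))$; the $(4,5;\pm7)$-cuspidal curvature is $\kappa_q=\dfrac{-77B^2+105AD+60AC}{\|c^{(4)}(0)\|^5}$, where $\|\cdot\|$ is the Euclidean norm. *)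

From Stdlib Require Import Reals.
From Coquelicot Require Import Coquelicot.
Open Scope R_scope.

(* A plane curve is given by its two coordinate functions x, y : R -> R. *)

Definition smooth_on (U : R -> Prop) (f : R -> R) : Prop :=
  forall (n : nat) (t : R), U t -> ex_derive_n f n t.

Definition in_interval (a b : Rbar) (t : R) : Prop := Rbar_lt a t /\ Rbar_lt t b.

Definition det2 (u1 u2 v1 v2 : R) : R := u1 * v2 - u2 * v1.

Definition cusp_curv (x y : R -> R) : R :=
  let x4 := Derive_n x 4 0 in let y4 := Derive_n y 4 0 in
  let x5 := Derive_n x 5 0 in let y5 := Derive_n y 5 0 in
  let x6 := Derive_n x 6 0 in let y6 := Derive_n y 6 0 in
  let x7 := Derive_n x 7 0 in let y7 := Derive_n y 7 0 in
  let A := det2 x5 y5 x4 y4 in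
  let B := det2 x6 y6 x4 y4 in
  let C := det2 x7 y7 x4 y4 in
  let D := det2 x6 y6 x5 y5 in
  (-77 * B ^ 2 + 105 * A * D + 60 * A * C) / (sqrt (x4 ^ 2 + y4 ^ 2)) ^ 5.

From Stdlib Require Import Reals Lra Lia.
From Coquelicot Require Import Coquelicot.
Open Scope R_scope.

(* Both invariances are algebraic identities between 4- to 7-jets at 0.
   A congruence x |-> R x + b multiplies each of A, B, C, D by det R = +-1 and
   preserves the norm of c^(4), so the numerator, quadratic in A, B, C, D, is
   unchanged.  For a reparametrisation psi with p = psi'(0) <> 0, the Faa di
   Bruno formula and c' = c'' = c''' = 0 at 0 give c4 |-> p^4 c4,
   c5 |-> p^5 c5 + 10 p^3 psi''(0) c4, and so on; the correction terms cancel in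
   -77 B^2 + 105 A D + 60 A C, which is multiplied by p^20 = (p^4)^5, exactly as
   the denominator is. *)

Lemma open_in_interval (a b : Rbar) : open (in_interval a b).
Proof. apply open_and; [apply open_Rbar_gt | apply open_Rbar_lt]. Qed.

Lemma open_symmetric_interval (eps : R) : open (fun t => -eps < t < eps).
Proof. apply open_and; [apply open_gt | apply open_lt]. Qed.

Lemma smooth_on_locally (U : R -> Prop) (f : R -> R) (t : R) (n : nat) :
  open U -> smooth_on U f -> U t ->
  locally t (fun u => forall k, (k <= n)%nat -> ex_derive_n f k u).
Proof.
  intros hU hf ht; apply (filter_imp U); [intros u hu k _; exact (hf k u hu) | exact (hU t ht)].
Qed.

Lemma smooth_on_scal_l (U : R -> Prop) (f : R -> R) (r : R) :
  smooth_on U f -> smooth_on U (fun u => r * f u).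
Proof. intros hf n t ht; apply ex_derive_n_scal_l, hf, ht. Qed.

Lemma smooth_on_plus (U : R -> Prop) (f g : R -> R) :
  open U -> smooth_on U f -> smooth_on U g -> smooth_on U (fun u => f u + g u).
Proof.
  intros hU hf hg n t ht.
  apply ex_derive_n_plus; apply smooth_on_locally with U; assumption.
Qed.

Lemma Derive_n_affine (U : R -> Prop) (f g : R -> R) (r s c t : R) (n : nat) :
  open U -> smooth_on U f -> smooth_on U g -> U t ->
  Derive_n (fun u => r * f u + s * g u + c) (S n) t
  = r * Derive_n f (S n) t + s * Derive_n g (S n) t.
Proof.
  intros hU hf hg ht.
  pose proof (smooth_on_scal_l U f r hf) as hrf.
  pose proof (smooth_on_scal_l U g s hg) as hsg.
  rewrite Derive_n_plus.
  - rewrite Derive_n_const, Rplus_0_r, Derive_n_plus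
      by (apply smooth_on_locally with U; assumption).
    now rewrite !Derive_n_scal_l.
  - apply smooth_on_locally with U; [| apply smooth_on_plus |]; assumption.
  - apply filter_forall; intros u k _; apply ex_derive_n_const.
Qed.

Section FaaDiBruno.

Variables f psi : R -> R.

Local Notation df j t := (Derive_n f j (psi t)).
Local Notation dp := (Derive_n psi).

(* Only orders up to 7 are spelled out; higher orders are junk [0]. *)
Definition faa_di_bruno (k : nat) (t : R) : R :=
  match k with
  | 0 => df 0 t
  | 1 => df 1 t * dp 1 t
  | 2 => df 1 t * dp 2 t + df 2 t * dp 1 t ^ 2
  | 3 => df 1 t * dp 3 t + 3 * df 2 t * dp 1 t * dp 2 t + df 3 t * dp 1 t ^ 3
  | 4 => df 1 t * dp 4 t + 3 * df 2 t * dp 2 t ^ 2 + 4 * df 2 t * dp 1 t * dp 3 t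
         + 6 * df 3 t * dp 1 t ^ 2 * dp 2 t + df 4 t * dp 1 t ^ 4
  | 5 => df 1 t * dp 5 t + 10 * df 2 t * dp 2 t * dp 3 t + 5 * df 2 t * dp 1 t * dp 4 t
         + 15 * df 3 t * dp 1 t * dp 2 t ^ 2 + 10 * df 3 t * dp 1 t ^ 2 * dp 3 t
         + 10 * df 4 t * dp 1 t ^ 3 * dp 2 t + df 5 t * dp 1 t ^ 5
  | 6 => df 1 t * dp 6 t + 10 * df 2 t * dp 3 t ^ 2 + 15 * df 2 t * dp 2 t * dp 4 t
         + 6 * df 2 t * dp 1 t * dp 5 t + 15 * df 3 t * dp 2 t ^ 3
         + 60 * df 3 t * dp 1 t * dp 2 t * dp 3 t + 15 * df 3 t * dp 1 t ^ 2 * dp 4 t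
         + 45 * df 4 t * dp 1 t ^ 2 * dp 2 t ^ 2 + 20 * df 4 t * dp 1 t ^ 3 * dp 3 t
         + 15 * df 5 t * dp 1 t ^ 4 * dp 2 t + df 6 t * dp 1 t ^ 6
  | 7 => df 1 t * dp 7 t + 35 * df 2 t * dp 3 t * dp 4 t + 21 * df 2 t * dp 2 t * dp 5 t
         + 7 * df 2 t * dp 1 t * dp 6 t + 105 * df 3 t * dp 2 t ^ 2 * dp 3 t
         + 70 * df 3 t * dp 1 t * dp 3 t ^ 2 + 105 * df 3 t * dp 1 t * dp 2 t * dp 4 t
         + 21 * df 3 t * dp 1 t ^ 2 * dp 5 t + 105 * df 4 t * dp 1 t * dp 2 t ^ 3
         + 210 * df 4 t * dp 1 t ^ 2 * dp 2 t * dp 3 t + 35 * df 4 t * dp 1 t ^ 3 * dp 4 t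
         + 105 * df 5 t * dp 1 t ^ 3 * dp 2 t ^ 2 + 35 * df 5 t * dp 1 t ^ 4 * dp 3 t
         + 21 * df 6 t * dp 1 t ^ 5 * dp 2 t + df 7 t * dp 1 t ^ 7
  | _ => 0
  end.

(* [auto_derive] unfolds [Derive_n] into nested [Derive]s, so its side goals are
   [ex_derive_n] facts only up to conversion, at an order found by search. *)
Local Ltac ex_derive_n_upto h :=
  let rec go n := lazymatch n with
    | 9%nat => fail
    | _ => first [exact (h n) | go (S n)]
    end in
  go O.

Lemma is_derive_faa_di_bruno (k : nat) (t : R) :
  (k < 7)%nat ->
  (forall n, ex_derive_n f n (psi t)) -> (forall n, ex_derive_n psi n t) ->
  is_derive (faa_di_bruno k) t (faa_di_bruno (S k) t).
Proof.
  intros hk hf hpsi.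
  do 7 (destruct k as [|k];
    [ unfold faa_di_bruno; auto_derive;
      [ repeat split; first [ex_derive_n_upto hf | ex_derive_n_upto hpsi]
      | simpl; ring ]
    | ]).
  lia.
Qed.

End FaaDiBruno.

Lemma Derive_n_comp_faa_di_bruno (U V : R -> Prop) (f psi : R -> R) (k : nat) :
  open U -> smooth_on V f -> smooth_on U psi -> (forall t, U t -> V (psi t)) ->
  (k <= 7)%nat -> forall t, U t ->
  Derive_n (fun u => f (psi u)) k t = faa_di_bruno f psi k t.
Proof.
  intros hU hf hpsi hV.
  induction k as [|k IH]; intros hk t ht; [reflexivity |].
  cbn [Derive_n]; rewrite (Derive_ext_loc _ (faa_di_bruno f psi k)).
  - apply is_derive_unique, is_derive_faa_di_bruno; [lia | |]; intros n.
    + exact (hf n (psi t) (hV t ht)).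
    + exact (hpsi n t ht).
  - apply (filter_imp U); [| exact (hU t ht)].
    intros u hu; apply IH; [lia | exact hu].
Qed.

Lemma Derive_neq0_of_left_inverse (psi phi : R -> R) (t : R) :
  ex_derive psi t -> ex_derive phi (psi t) ->
  locally t (fun u => phi (psi u) = u) -> Derive psi t <> 0.
Proof.
  intros hpsi hphi hinv hzero.
  pose proof (is_derive_comp phi psi t _ _ (Derive_correct _ _ hphi) (Derive_correct _ _ hpsi))
    as chain.
  assert (id_derive : is_derive (fun u => phi (psi u)) t 1).
  { apply (is_derive_ext_loc (fun u => u)); [| apply (is_derive_id t)].
    apply (filter_imp (fun u => phi (psi u) = u)); [now intros u -> | exact hinv]. }
  pose proof (is_derive_unique _ _ _ chain) as one.
  rewrite (is_derive_unique _ _ _ id_derive), hzero in one.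
  cbv [scal] in one; simpl in one; cbv [mult] in one; simpl in one; lra.
Qed.

Definition reparam_jet (p q2 q3 q4 : R) (f g : R -> R) : Prop :=
  let c4 := Derive_n f 4 0 in let c5 := Derive_n f 5 0 in
  let c6 := Derive_n f 6 0 in let c7 := Derive_n f 7 0 in
  Derive_n g 4 0 = p ^ 4 * c4 /\
  Derive_n g 5 0 = p ^ 5 * c5 + 10 * p ^ 3 * q2 * c4 /\
  Derive_n g 6 0 = p ^ 6 * c6 + 15 * p ^ 4 * q2 * c5
                   + (45 * p ^ 2 * q2 ^ 2 + 20 * p ^ 3 * q3) * c4 /\
  Derive_n g 7 0 = p ^ 7 * c7 + 21 * p ^ 5 * q2 * c6
                   + (105 * p ^ 3 * q2 ^ 2 + 35 * p ^ 4 * q3) * c5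
                   + (105 * p * q2 ^ 3 + 210 * p ^ 2 * q2 * q3 + 35 * p ^ 3 * q4) * c4.

Lemma reparam_jet_comp (U V : R -> Prop) (f psi : R -> R) :
  open U -> U 0 -> smooth_on V f -> smooth_on U psi -> (forall t, U t -> V (psi t)) ->
  psi 0 = 0 -> Derive_n f 1 0 = 0 -> Derive_n f 2 0 = 0 -> Derive_n f 3 0 = 0 ->
  reparam_jet (Derive_n psi 1 0) (Derive_n psi 2 0) (Derive_n psi 3 0) (Derive_n psi 4 0)
    f (fun t => f (psi t)).
Proof.
  intros hU h0 hf hpsi hV psi0 f1 f2 f3.
  unfold reparam_jet; cbv zeta.
  rewrite !(Derive_n_comp_faa_di_bruno U V f psi) by (auto || lia).
  cbn [faa_di_bruno]; rewrite psi0, f1, f2, f3.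
  repeat split; ring.
Qed.

Lemma sqrt_sq_mult (c e : R) : 0 <= c -> 0 <= e -> sqrt (c ^ 2 * e) = c * sqrt e.
Proof.
  intros hc he; rewrite sqrt_mult, sqrt_pow2 by (auto using pow2_ge_0); reflexivity.
Qed.

(* No hypothesis [s <> 0]: if [s = 0] both sides are the junk value [_ / 0 = 0]. *)
Lemma div_pow5_scale (c N s : R) : c <> 0 -> c ^ 5 * N / (c * s) ^ 5 = N / s ^ 5.
Proof.
  intros hc; unfold Rdiv; rewrite Rpow_mult_distr, Rinv_mult.
  set (k := / s ^ 5); field; exact hc.
Qed.

Lemma cusp_curv_reparam (x y X Y : R -> R) (p q2 q3 q4 : R) :
  p <> 0 -> reparam_jet p q2 q3 q4 x X -> reparam_jet p q2 q3 q4 y Y ->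
  cusp_curv X Y = cusp_curv x y.
Proof.
  intros hp [X4 [X5 [X6 X7]]] [Y4 [Y5 [Y6 Y7]]].
  unfold cusp_curv, det2; cbv zeta.
  rewrite X4, X5, X6, X7, Y4, Y5, Y6, Y7.
  match goal with |- ?N' / sqrt ?e' ^ 5 = ?N / sqrt ?e ^ 5 =>
    replace e' with ((p ^ 4) ^ 2 * e) by ring;
    replace N' with ((p ^ 4) ^ 5 * N) by ring end.
  rewrite sqrt_sq_mult.
  - apply div_pow5_scale, pow_nonzero, hp.
  - replace (p ^ 4) with ((p ^ 2) ^ 2) by ring.
    apply pow2_ge_0.
  - apply Rplus_le_le_0_compat; apply pow2_ge_0.
Qed.

Lemma orthogonal_norm_sq (r11 r12 r21 r22 a b : R) :
  r11 * r11 + r21 * r21 = 1 -> r12 * r12 + r22 * r22 = 1 -> r11 * r12 + r21 * r22 = 0 ->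
  (r11 * a + r12 * b) ^ 2 + (r21 * a + r22 * b) ^ 2 = a ^ 2 + b ^ 2.
Proof.
  intros o1 o2 o3.
  replace ((r11 * a + r12 * b) ^ 2 + (r21 * a + r22 * b) ^ 2)
    with ((r11 * r11 + r21 * r21) * a ^ 2 + 2 * (r11 * r12 + r21 * r22) * a * b
          + (r12 * r12 + r22 * r22) * b ^ 2) by ring.
  rewrite o1, o2, o3; ring.
Qed.

Lemma orthogonal_det_sq (r11 r12 r21 r22 : R) :
  r11 * r11 + r21 * r21 = 1 -> r12 * r12 + r22 * r22 = 1 -> r11 * r12 + r21 * r22 = 0 ->
  (r11 * r22 - r12 * r21) ^ 2 = 1.
Proof.
  intros o1 o2 o3.
  replace ((r11 * r22 - r12 * r21) ^ 2)
    with ((r11 * r11 + r21 * r21) * (r12 * r12 + r22 * r22) - (r11 * r12 + r21 * r22) ^ 2)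
    by ring.
  rewrite o1, o2, o3; ring.
Qed.

Lemma cusp_curv_orthogonal (x y X Y : R -> R) (r11 r12 r21 r22 : R) :
  r11 * r11 + r21 * r21 = 1 -> r12 * r12 + r22 * r22 = 1 -> r11 * r12 + r21 * r22 = 0 ->
  (forall n, Derive_n X (S n) 0 = r11 * Derive_n x (S n) 0 + r12 * Derive_n y (S n) 0) ->
  (forall n, Derive_n Y (S n) 0 = r21 * Derive_n x (S n) 0 + r22 * Derive_n y (S n) 0) ->
  cusp_curv X Y = cusp_curv x y.
Proof.
  intros o1 o2 o3 hX hY.
  unfold cusp_curv, det2; cbv zeta.
  rewrite !hX, !hY, orthogonal_norm_sq by assumption.
  match goal with |- ?N' / _ = ?N / _ =>
    replace N' with ((r11 * r22 - r12 * r21) ^ 2 * N) by ring end.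
  rewrite orthogonal_det_sq by assumption.
  now rewrite Rmult_1_l.
Qed.

Theorem mainTheorem10 (a b : Rbar) (x y : R -> R)
  (ha : Rbar_lt a 0) (hb : Rbar_lt 0 b)
  (hx : smooth_on (in_interval a b) x) (hy : smooth_on (in_interval a b) y)
  (h1 : Derive_n x 1 0 = 0 /\ Derive_n y 1 0 = 0)
  (h2 : Derive_n x 2 0 = 0 /\ Derive_n y 2 0 = 0)
  (h3 : Derive_n x 3 0 = 0 /\ Derive_n y 3 0 = 0)
  (h4 : Derive_n x 4 0 <> 0 \/ Derive_n y 4 0 <> 0) :
  (forall (psi phi : R -> R) (eps del : R),
      0 < eps -> 0 < del ->
      smooth_on (fun t => -eps < t < eps) psi ->
      smooth_on (fun s => -del < s < del) phi ->
      (forall t, -eps < t < eps -> -del < psi t < del) ->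
      (forall s, -del < s < del -> -eps < phi s < eps) ->
      (forall t, -eps < t < eps -> phi (psi t) = t) ->
      (forall s, -del < s < del -> psi (phi s) = s) ->
      psi 0 = 0 ->
      (forall t, -eps < t < eps -> in_interval a b (psi t)) ->
      cusp_curv (fun t => x (psi t)) (fun t => y (psi t)) = cusp_curv x y)
  /\
  (forall (r11 r12 r21 r22 b1 b2 : R),
      r11 * r11 + r21 * r21 = 1 ->
      r12 * r12 + r22 * r22 = 1 ->
      r11 * r12 + r21 * r22 = 0 ->
      cusp_curv (fun t => r11 * x t + r12 * y t + b1)
                (fun t => r21 * x t + r22 * y t + b2) = cusp_curv x y).
Proof.
  destruct h1 as [x1 y1], h2 as [x2 y2], h3 as [x3 y3].
  split.
  - intros psi phi eps del heps hdel hpsi hphi _ _ hinv _ psi0 hin.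
    pose proof (open_symmetric_interval eps) as hU.
    assert (h0 : -eps < 0 < eps) by lra.
    apply (cusp_curv_reparam _ _ _ _ (Derive_n psi 1 0) (Derive_n psi 2 0)
             (Derive_n psi 3 0) (Derive_n psi 4 0));
      [| apply reparam_jet_comp with (U := fun t => -eps < t < eps) (V := in_interval a b)
       ..]; try assumption.
    apply Derive_neq0_of_left_inverse with phi.
    + exact (hpsi 1%nat 0 h0).
    + rewrite psi0; exact (hphi 1%nat 0 ltac:(lra)).
    + apply (filter_imp _ _ hinv), hU, h0.
  - intros r11 r12 r21 r22 b1 b2 o1 o2 o3.
    assert (h0 : in_interval a b 0) by (split; assumption).
    apply cusp_curv_orthogonal with r11 r12 r21 r22; try assumption; intros n;
      apply Derive_n_affine with (in_interval a b); auto using open_in_interval.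
Qed.
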